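(* Let $A$ be a finite abelian group with $|A|=n$, and let $T$ be an $A$-cordial tree with $nk$ vertices for some $k\in\mathbb{N}$. If $T^*$ is a tree containing $T$ as an induced subgraph and $|V(T^* )|\le nk+\lfloor n/2\rfloor+1$, then $T^*$ is $A$-cordial.
   Context: $\mathbb{N}=\mathbb{Z}_{\ge0}$. Graphs are finite, simple and undirected. For an abelian group $A$ and a graph $G=(V,E)$, a vertex labeling $\ell:V\to A$ induces an edge labeling $\ell(\{v_1,v_2\})=\ell(v_1)+\ell(v_2)$. Let $f_V(a)=|\{v\in V:\ell(v)=a\}|$ and $f_E(a)=|\{e\in E:\ell(e)=a\}|$. The labeling is $A$-cordial if $|f_V(a_1)-f_V(a_2)|\le 1$ and $|f_E(a_1)-f_E(a_2)|\le 1$ for all $a_1,a_2\in A$; $G$ is $A$-cordial if it admits an $A$-cordial labeling. *)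

From mathcomp Require Import all_boot all_algebra.
Set Implicit Arguments. Unset Strict Implicit. Unset Printing Implicit Defensive.
Import GRing.Theory.
Local Open Scope ring_scope.

Section Graphs.
Variable V : finType.
Variable adj : rel V.

Definition simple_graph : Prop := symmetric adj /\ irreflexive adj.

Definition edges : {set {set V}} :=
  [set e : {set V} | [exists x, exists y, adj x y && (e == [set x; y])]].

Definition is_tree : Prop :=
  simple_graph /\ (0 < #|V|)%N /\ (forall x y : V, connect adj x y)
  /\ #|edges| = (#|V| - 1)%N.

Variable A : finZmodType.

Definition fV (l : V -> A) (a : A) : nat := #|[set v | l v == a]|.

Definition fE (l : V -> A) (a : A) : nat :=
  #|[set e in edges | [exists x, exists y,
        [&& adj x y, e == [set x; y] & l x + l y == a]]]|.

Definition cordial_labeling (l : V -> A) : Prop :=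
  forall a1 a2 : A,
    (fV l a1 <= (fV l a2).+1)%N /\ (fV l a2 <= (fV l a1).+1)%N /\
    (fE l a1 <= (fE l a2).+1)%N /\ (fE l a2 <= (fE l a1).+1)%N.

Definition A_cordial : Prop := exists l : V -> A, cordial_labeling l.

End Graphs.

Definition induced_subgraph (V W : finType) (adjV : rel V) (adjW : rel W) : Prop :=
  exists f : V -> W, injective f /\ forall x y, adjV x y = adjW (f x) (f y).

From mathcomp Require Import all_boot all_algebra.
From mathcomp Require Import zify.
Set Implicit Arguments. Unset Strict Implicit. Unset Printing Implicit Defensive.
Import GRing.Theory.

(* Since |T| = nk, cordiality forces every vertex label of T to occur exactly
   k times and, T having nk - 1 edges, every edge label to occur k times except
   one label a0, which occurs k - 1 times.  As T* is connected, its
   m <= n/2 + 1 new vertices can be added one at a time, each as a leaf y hung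
   on an already labelled vertex x.  The first leaf gets the label making xy an
   a0-edge.  When j >= 1 leaves are present, the next one gets a label z
   different from the j labels of the new vertices and such that l(x) + z
   differs from the j - 1 labels of the new edges other than the first; this
   excludes at most 2j - 1 < n values.  In the end every vertex label and every
   edge label occurs k or k + 1 times. *)

Definition balanced (I : Type) (h : I -> nat) : Prop := forall a b, h a <= (h b).+1.

Section BalancedCounts.
Variable I : finType.

Lemma sum_le_const_eq (h : I -> nat) c :
  (forall b, h b <= c) -> \sum_b h b = #|I| * c -> forall b, h b = c.
Proof.
move=> le_hc sum_h b.
have := leqif_sum (fun i (_ : predT i) => leqif_eq (le_hc i)).
by move=> [_]; rewrite sum_h sum_nat_const eqxx => /esym/forall_inP/(_ b isT)/eqP.
Qed.

Lemma sum_ge_const_eq (h : I -> nat) c :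
  (forall b, c <= h b) -> \sum_b h b = #|I| * c -> forall b, h b = c.
Proof.
move=> le_ch sum_h b.
have := leqif_sum (fun i (_ : predT i) => leqif_eq (le_ch i)).
by move=> [_]; rewrite sum_h sum_nat_const eqxx => /esym/forall_inP/(_ b isT)/eqP.
Qed.

Lemma balanced_of_bounds (h : I -> nat) k :
  (forall a, k <= h a <= k.+1) -> balanced h.
Proof. by move=> h_k a b; have := h_k a; have := h_k b; lia. Qed.

Variables (h : I -> nat) (h_bal : balanced h).

Lemma balanced_sum_eq c : \sum_b h b = #|I| * c -> forall b, h b = c.
Proof.
move=> sum_h; have [a lt_ac | ge_c] := pickP (fun a => h a < c).
  by apply: sum_le_const_eq => // b; apply: leq_trans (h_bal b a) lt_ac.
by apply: sum_ge_const_eq => // b; rewrite leqNgt ge_c.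
Qed.

Lemma balanced_sum_eq_pred c : 0 < #|I| * c -> \sum_b h b = (#|I| * c).-1 ->
  exists2 a0, (h a0).+1 = c & forall b, b != a0 -> h b = c.
Proof.
move=> c_gt0 sum_h.
have [a0 lt_a0c | ge_c] := pickP (fun a => h a < c); last first.
  have : #|I| * c <= \sum_b h b.
    by rewrite -sum_nat_const; apply: leq_sum => b _; rewrite leqNgt ge_c.
  by rewrite sum_h; lia.
have le_c b : h b + (b == a0) <= c.
  case: eqP => [-> | _]; first by rewrite addn1.
  by rewrite addn0; apply: leq_trans (h_bal b a0) lt_a0c.
have sum_c : \sum_b (h b + (b == a0)) = #|I| * c.
  rewrite big_split /= sum_h (bigD1 a0) //= eqxx big1 => [|b /negbTE -> //].
  by rewrite addn0 addn1 prednK.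
have eq_c := sum_le_const_eq le_c sum_c.
exists a0; first by have := eq_c a0; rewrite eqxx addn1.
by move=> b /negbTE b_a0; have := eq_c b; rewrite b_a0 addn0.
Qed.

End BalancedCounts.

Lemma cordial_balancedP (V : finType) (adj : rel V) (A : finZmodType)
    (l : V -> A) :
  cordial_labeling adj l <-> balanced (fV l) /\ balanced (fE adj l).
Proof.
split=> [cord | [balV balE] a1 a2]; last by [].
by split=> a1 a2; have [? [? [? ?]]] := cord a1 a2.
Qed.

Lemma sum_card_fibres (T B : finType) (E : {set T}) (g : T -> B) :
  \sum_b #|[set e in E | g e == b]| = #|E|.
Proof.
rewrite -sum1_card (partition_big g predT) //=.
by apply: eq_bigr => b _; rewrite -sum1_card; apply: eq_bigl => e; rewrite inE.
Qed.

Lemma card_fibre_le1 (T B : finType) (D : {set T}) (g : T -> B) b :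
  {in D &, injective g} -> #|[set x in D | g x == b]| <= 1.
Proof.
move=> g_inj; apply/card_le1_eqP => x1 x2.
by rewrite !inE => /andP[x1D /eqP g1] /andP[x2D /eqP g2]; apply: g_inj; rewrite ?g1.
Qed.

Lemma exists_notin (T : finType) (X : {set T}) :
  #|X| < #|T| -> exists x, x \notin X.
Proof.
move=> ltX; have /card_gt0P[x] : 0 < #|~: X| by rewrite cardsCs setCK subn_gt0.
by rewrite inE; exists x.
Qed.

Lemma card_setId_setU (T : finType) (X Y : {set T}) (p : pred T) :
    [disjoint X & Y] ->
  #|[set x in X :|: Y | p x]| = #|[set x in X | p x]| + #|[set x in Y | p x]|.
Proof.
move=> XY; rewrite !setIdE setIUl; apply/eqP; rewrite (leq_card_setU _ _).2.
exact: disjointW (subsetIl _ _) (subsetIl _ _) XY.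
Qed.

Lemma card_setId_imset (T T' : finType) (h : T -> T') (D : {set T})
    (p : pred T') :
  injective h -> #|[set y in h @: D | p y]| = #|[set x in D | p (h x)]|.
Proof.
move=> h_inj; rewrite -(card_imset _ h_inj); apply: eq_card => y.
rewrite inE; apply/andP/imsetP => [[/imsetP[x xD ->] px] | [x]].
  by exists x; rewrite ?inE ?xD.
by rewrite inE => /andP[xD px] ->; rewrite imset_f.
Qed.

Lemma in_inj_setU1 (T B : finType) (g : T -> B) (D : {set T}) y :
  {in D &, injective g} -> g y \notin g @: D -> {in y |: D &, injective g}.
Proof.
move=> g_inj gyD x1 x2; rewrite !in_setU1.
case/predU1P=> [-> | x1D] /predU1P[-> | x2D] // g12.
- by case/negP: gyD; rewrite g12 imset_f.
- by case/negP: gyD; rewrite -g12 imset_f.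
- exact: g_inj.
Qed.

Lemma connect_exit (T : finType) (e : rel T) (S : {set T}) u w :
  connect e u w -> u \in S -> w \notin S ->
  exists x y, [/\ x \in S, y \notin S & e x y].
Proof.
case/connectP=> p; elim: p u => [|z p IH] u /=; first by move=> _ -> ->.
case/andP=> euz pz w_last uS wS; have [zS | zS] := boolP (z \in S).
  exact: IH pz w_last zS wS.
by exists u, z.
Qed.

Lemma edge_imset (V W : finType) (adjV : rel V) (adjW : rel W) (f : V -> W) e :
    (forall x y, adjV x y = adjW (f x) (f y)) ->
  e \in edges adjV -> f @: e \in edges adjW.
Proof.
move=> f_adj; rewrite !inE => /existsP[x /existsP[y /andP[adj_xy /eqP ->]]].
apply/existsP; exists (f x); apply/existsP; exists (f y).
by rewrite imsetU1 imset_set1 -f_adj adj_xy eqxx.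
Qed.

Section EdgeLabels.
Variables (T : finType) (A : finZmodType).

Definition edge_label (L : T -> A) (e : {set T}) : A := (\sum_(x in e) L x)%R.

Lemma edge_label2 (L : T -> A) x y : x != y -> edge_label L [set x; y] = (L x + L y)%R.
Proof. by move=> xy; rewrite /edge_label big_setU1 /= ?big_set1 // inE. Qed.

Lemma fE_edge_label (adj : rel T) (L : T -> A) a : irreflexive adj ->
  fE adj L a = #|[set e in edges adj | edge_label L e == a]|.
Proof.
move=> irr; have neq_adj x y : adj x y -> x != y.
  by apply: contraTneq => ->; rewrite irr.
apply: eq_card => e; rewrite !inE; apply: andb_id2l.
case/existsP=> x0 /existsP[y0 /andP[adj0 /eqP->]]; apply/idP/idP.
  case/existsP=> x /existsP[y /and3P[adj_xy /eqP-> /eqP<-]].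
  by rewrite edge_label2 ?neq_adj.
move=> label_a; apply/existsP; exists x0; apply/existsP; exists y0.
by rewrite adj0 eqxx -edge_label2 ?neq_adj.
Qed.

Lemma sum_fV (L : T -> A) : \sum_a fV L a = #|T|.
Proof.
rewrite -cardsT -(sum_card_fibres _ L); apply: eq_bigr => a _.
by apply: eq_card => v; rewrite !inE.
Qed.

Lemma sum_fE (adj : rel T) (L : T -> A) :
  irreflexive adj -> \sum_a fE adj L a = #|edges adj|.
Proof.
move=> irr; rewrite -(sum_card_fibres _ (edge_label L)).
by apply: eq_bigr => a _; rewrite fE_edge_label.
Qed.

End EdgeLabels.

Section TreeExtension.
Variables (A : finZmodType) (V W : finType) (adj : rel V) (adjS : rel W).
Variables (f : V -> W) (l : V -> A) (a0 : A).
Hypothesis f_inj : injective f.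

Local Notation U := (f @: [set: V]).

(* [S] is the set of vertices labelled so far, [P] the edges added with them
   and [e0] the first such edge, labelled [a0]; the new vertices carry pairwise
   distinct labels, and so do the edges of [P] other than [e0]. *)
Record extension (S : {set W}) (L : W -> A) (P : {set {set W}}) (e0 : {set W}) :
    Prop := Extension {
  ext_old_sub : U \subset S;
  ext_card : #|S| = #|V| + #|P|;
  ext_old_label : forall v, L (f v) = l v;
  ext_new_inj : {in S :\: U &, injective L};
  ext_edges : P \subset edges adjS;
  ext_edge_sub : forall e, e \in P -> e \subset S;
  ext_edge_new : forall e, e \in P -> ~~ (e \subset U);
  ext_first : P != set0 -> e0 \in P /\ edge_label L e0 = a0;
  ext_edge_inj : {in P :\ e0 &, injective (edge_label L)}
}.

Lemma card_new_vertices S L P e0 : extension S L P e0 -> #|S :\: U| = #|P|.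
Proof.
case=> old_sub cardS *.
by rewrite cardsD (setIidPr old_sub) card_imset // cardsT cardS addKn.
Qed.

Lemma card_new_edge_label S L P e0 a : extension S L P e0 -> P != set0 ->
  (a0 == a) <= #|[set e in P | edge_label L e == a]| <= (a0 == a).+1.
Proof.
move=> ext P_neq0; have [e0P label_e0] := ext_first ext P_neq0.
rewrite (cardsD1 e0) !inE e0P label_e0 /= leq_addr -addn1 leq_add2l.
rewrite (_ : _ :\ e0 = [set e in P :\ e0 | edge_label L e == a]).
  exact: card_fibre_le1 (ext_edge_inj ext).
by apply/setP => e; rewrite !inE andbA.
Qed.

Definition base_label (w : W) : A :=
  if [pick v | f v == w] is Some v then l v else 0%R.

Lemma base_label_f v : base_label (f v) = l v.
Proof.
by rewrite /base_label; case: pickP => [v' /eqP/f_inj -> // | /(_ v)]; rewrite eqxx.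
Qed.

Lemma extension_base : extension U base_label set0 set0.
Proof.
split; rewrite ?cards0 ?card_imset ?cardsT ?addn0 ?setDv ?sub0set //.
- exact: base_label_f.
- by move=> w1 w2; rewrite inE.
- by move=> e; rewrite inE.
- by move=> e; rewrite inE.
- by rewrite eqxx.
- by move=> e1 e2; rewrite !inE andbF.
Qed.

Section AddLeaf.
Variables (S : {set W}) (L : W -> A) (P : {set {set W}}) (e0 : {set W}).
Variables (x y : W) (z : A).
Hypotheses (ext : extension S L P e0) (xS : x \in S) (yS : y \notin S).
Hypothesis adj_xy : adjS x y.
Hypothesis z_new : z \notin L @: (S :\: U).
Hypothesis xz_new : (L x + z)%R \notin edge_label L @: (P :\ e0).
Hypothesis xz_first : P = set0 -> (L x + z)%R = a0.

Let L' w := if w == y then z else L w.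

Let L'_S : {in S, L' =1 L}.
Proof.
by move=> w wS; rewrite /L'; case: eqP => // wy; case/negP: yS; rewrite -wy.
Qed.

Let label_S (e : {set W}) : e \subset S -> edge_label L' e = edge_label L e.
Proof. by move=> eS; apply: eq_bigr => w /(subsetP eS); apply: L'_S. Qed.

Let label_xy : edge_label L' [set x; y] = (L x + z)%R.
Proof.
rewrite edge_label2; last by apply: contraNneq yS => <-.
by rewrite [L' x]L'_S // /L' eqxx.
Qed.

Let xy_notin_P : [set x; y] \notin P.
Proof.
apply: contra yS => /(ext_edge_sub ext)/subsetP; apply.
by rewrite !inE eqxx orbT.
Qed.

Lemma extension_add_leaf :
  extension (y |: S) L' ([set x; y] |: P) (if P == set0 then [set x; y] else e0).
Proof.
have [old_sub cardS old_label new_inj P_edges P_sub P_new first edge_inj] := ext.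
have y_new : y \notin U by apply: contra yS => /(subsetP old_sub).
split.
- exact: subset_trans old_sub (subsetU1 _ _).
- by rewrite !cardsU1 yS xy_notin_P cardS addnS.
- by move=> v; rewrite L'_S ?old_label // (subsetP old_sub) ?imset_f.
- have new_sub : {subset (y |: S) :\: U <= y |: (S :\: U)}.
    by move=> w; rewrite !inE; case: (w == y).
  apply: (sub_in2 new_sub); apply: in_inj_setU1.
    move=> w1 w2 w1N w2N; rewrite !L'_S ?(setDP w1N).1 ?(setDP w2N).1 //.
    exact: new_inj.
  have -> : L' @: (S :\: U) = L @: (S :\: U).
    by apply: eq_in_imset => w /setDP[wS _]; apply: L'_S.
  by rewrite /L' eqxx.
- apply/subsetP => e /setU1P[-> | /(subsetP P_edges)//].
  rewrite inE; apply/existsP; exists x; apply/existsP; exists y.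
  by rewrite adj_xy eqxx.
- move=> e /setU1P[-> | eP]; last exact: subset_trans (P_sub e eP) (subsetU1 _ _).
  by apply/subsetP => w /set2P[-> | ->]; rewrite !inE ?xS ?eqxx ?orbT.
- move=> e /setU1P[-> | eP]; last exact: P_new.
  by apply: contra y_new => /subsetP; apply; rewrite !inE eqxx orbT.
- move=> _; have [P0 | P_neq0] := eqVneq P set0.
    by rewrite setU11 label_xy xz_first.
  have [e0P label_e0] := first P_neq0.
  by rewrite setU1r // label_S ?P_sub.
- have edge_sub : {subset ([set x; y] |: P) :\ (if P == set0 then [set x; y] else e0)
                         <= [set x; y] |: (P :\ e0)}.
    move=> e; case: eqP => [-> | _]; rewrite !inE.
      by case: (e == _); rewrite ?andbF.
    by case: (e == _); rewrite ?orbT ?andbT.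
  apply: (sub_in2 edge_sub); apply: in_inj_setU1.
    move=> e1 e2 e1N e2N.
    by rewrite !label_S ?P_sub ?(setD1P e1N).2 ?(setD1P e2N).2 //; apply: edge_inj.
  have -> : edge_label L' @: (P :\ e0) = edge_label L @: (P :\ e0).
    by apply: eq_in_imset => e /setD1P[_ eP]; apply: label_S; apply: P_sub.
  by rewrite label_xy.
Qed.
End AddLeaf.

Hypothesis V_gt0 : 0 < #|V|.
Hypothesis W_connected : forall u w : W, connect adjS u w.

Lemma extension_grow S L P e0 : extension S L P e0 ->
  #|P| < #|W| - #|V| -> #|P|.*2 <= #|A| ->
  exists S' L' P' e0', extension S' L' P' e0' /\ #|P'| = #|P|.+1.
Proof.
move=> ext ltP leP; have [old_sub cardS _ _ _ _ _ first _] := ext.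
have [w wS] : exists w, w \notin S by apply: exists_notin; rewrite cardS; lia.
have [u uS] : exists u, u \in S by apply/card_gt0P; rewrite cardS; lia.
have [x [y [xS yS adj_xy]]] := connect_exit (W_connected u w) uS wS.
have [z [z_new xz_new xz_first]] : exists z, [/\ z \notin L @: (S :\: U),
    (L x + z)%R \notin edge_label L @: (P :\ e0) & P = set0 -> (L x + z)%R = a0].
  have [P0 | P_neq0] := eqVneq P set0.
    exists (a0 - L x)%R; rewrite [(L x + _)%R]addrC subrK P0 set0D imset0 inE.
    have /cards0_eq -> : #|S :\: U| = 0 by rewrite (card_new_vertices ext) P0 cards0.
    by rewrite imset0 inE.
  pose X := L @: (S :\: U) :|: [set (b - L x)%R | b in edge_label L @: (P :\ e0)].
  have [z zX] : exists z, z \notin X.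
    apply: exists_notin; apply: leq_ltn_trans (leq_card_setU _ _) (leq_trans _ leP).
    rewrite -addnn -addnS; apply: leq_add.
      by rewrite -(card_new_vertices ext) leq_imset_card.
    rewrite [in X in _ < X](cardsD1 e0) (first P_neq0).1 add1n ltnS.
    exact: leq_trans (leq_imset_card _ _) (leq_imset_card _ _).
  exists z; move: zX; rewrite inE negb_or => /andP[-> zX]; split=> //; last first.
    by move=> P0; rewrite P0 eqxx in P_neq0.
  apply: contra zX => xz_label; apply/imsetP; exists (L x + z)%R => //.
  by rewrite addrC addKr.
have ext' := extension_add_leaf ext xS yS adj_xy z_new xz_new xz_first.
do 4 eexists; split; first exact: ext'.
by have := ext_card ext'; rewrite cardsU1 yS cardS; lia.
Qed.

Lemma extension_exists j : j <= #|W| - #|V| -> j.-1.*2 <= #|A| ->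
  exists S L P e0, extension S L P e0 /\ #|P| = j.
Proof.
elim: j => [|j IH] le_jm le_jA.
  by do 4 eexists; split; [apply: extension_base | apply: cards0].
have le_jA' : j.-1.*2 <= #|A| by apply: leq_trans le_jA; rewrite leq_double leq_pred.
have [S [L [P [e0 [ext cardP]]]]] := IH (ltnW le_jm) le_jA'.
by rewrite -cardP; apply: (extension_grow ext); rewrite cardP.
Qed.

Section CompleteExtension.
Variables (S : {set W}) (L : W -> A) (P : {set {set W}}) (e0 : {set W}).
Hypotheses (ext : extension S L P e0) (cardP : #|P| = #|W| - #|V|).

Local Notation old_edges := [set f @: e | e : {set V} in edges adj].

Lemma extension_full : S = setT.
Proof.
apply/eqP; rewrite eqEcard subsetT cardsT (ext_card ext) cardP /=.
by rewrite -leq_subLR.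
Qed.

Lemma fV_extension a : fV l a <= fV L a <= (fV l a).+1.
Proof.
have [_ _ old_label new_inj _ _ _ _ _] := ext.
have old_a : [set w | L w == a] :&: U = f @: [set v | l v == a].
  apply/setP => w; rewrite !inE.
  apply/andP/imsetP => [[/eqP Lw /imsetP[v _ w_fv]] | [v]].
    by exists v; rewrite // inE -old_label -w_fv Lw.
  by rewrite inE => /eqP lv ->; split; rewrite ?old_label ?lv ?imset_f ?inE.
have new_a : #|[set w | L w == a] :\: U| <= 1.
  rewrite (_ : _ :\: U = [set w in S :\: U | L w == a]); first exact: card_fibre_le1.
  by apply/setP => w; rewrite extension_full !inE andbT.
rewrite /fV -(cardsID U [set w | L w == a]) old_a card_imset //.
by rewrite leq_addr -addn1 leq_add2l.
Qed.

Hypotheses (adj_irr : irreflexive adj) (adjS_irr : irreflexive adjS).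
Hypothesis f_adj : forall x y, adj x y = adjS (f x) (f y).
Hypotheses (cardEV : #|edges adj| = #|V| - 1) (cardEW : #|edges adjS| = #|W| - 1).

Lemma edges_extension : [disjoint old_edges & P] /\ old_edges :|: P = edges adjS.
Proof.
have [old_sub _ _ _ P_edges _ P_new _ _] := ext.
have old_new : [disjoint old_edges & P].
  rewrite -setI_eq0; apply/eqP/setP => e; rewrite !inE.
  apply/andP => -[/imsetP[e' _ ->]].
  by move/P_new; rewrite imsetS ?subsetT.
have card_old : #|old_edges| = #|V| - 1.
  by rewrite card_imset ?cardEV //; apply: imset_inj.
have le_VW : #|V| <= #|W| by rewrite -cardsT -(card_imset _ f_inj) max_card.
split=> //; apply/eqP; rewrite eqEcard subUset P_edges andbT.
have /eqP -> : #|old_edges :|: P| == #|V| - 1 + #|P|.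
  by rewrite -card_old (leq_card_setU _ _).2.
rewrite cardEW cardP; apply/andP; split; last by lia.
by apply/subsetP => e /imsetP[e' e'E ->]; apply: edge_imset.
Qed.

Lemma fE_extension a :
  fE adjS L a = fE adj l a + #|[set e in P | edge_label L e == a]|.
Proof.
have [old_new old_newE] := edges_extension.
rewrite !fE_edge_label // -old_newE card_setId_setU // card_setId_imset.
  2: exact: imset_inj.
congr (_ + _); apply: eq_card => e; rewrite !inE; congr (_ && (_ == a)).
rewrite /edge_label big_imset /=; last by move=> ? ? _ _; apply: f_inj.
by under eq_bigr do rewrite (ext_old_label ext).
Qed.

Lemma fV_extension_balanced k : (forall a, fV l a = k) -> balanced (fV L).
Proof.
move=> fV_k; apply: (balanced_of_bounds (k := k)) => a.
by rewrite -(fV_k a) fV_extension.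
Qed.

Lemma fE_extension_balanced k : balanced (fE adj l) ->
    (fE adj l a0).+1 = k -> (forall a, a != a0 -> fE adj l a = k) ->
  balanced (fE adjS L).
Proof.
move=> bal_l fE_a0 fE_k; have [P0 | P_neq0] := eqVneq P set0.
  have fE_L a : fE adjS L a = fE adj l a.
    rewrite fE_extension P0 -[RHS]addn0; congr (_ + _).
    by apply: eq_card0 => e; rewrite !inE.
  by move=> a b; rewrite !fE_L.
apply: (balanced_of_bounds (k := k)) => a; rewrite fE_extension.
have := card_new_edge_label a ext P_neq0.
have [<- | a_neq0] := eqVneq a0 a; first by rewrite -fE_a0; lia.
by rewrite fE_k 1?eq_sym //; lia.
Qed.

End CompleteExtension.

End TreeExtension.

Theorem lemma4p1 (A : finZmodType) (k : nat)
  (V : finType) (adj : rel V) (W : finType) (adjS : rel W) :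
  is_tree adj -> #|V| = (#|A| * k)%N -> A_cordial adj A ->
  is_tree adjS -> induced_subgraph adj adjS ->
  (#|W| <= #|A| * k + #|A| %/ 2 + 1)%N ->
  A_cordial adjS A.
Proof.
move=> [[_ adj_irr] [V_gt0 [_ cardEV]]] cardV [l /cordial_balancedP[balV balE]].
move=> [[_ adjS_irr] [_ [W_connected cardEW]]] [f [f_inj f_adj]] le_W.
have fV_k := balanced_sum_eq balV (etrans (sum_fV l) cardV).
have nk_gt0 : 0 < #|A| * k by rewrite -cardV.
have sum_fE_l : \sum_a fE adj l a = (#|A| * k).-1.
  by rewrite sum_fE // cardEV cardV subn1.
have [a0 fE_a0 fE_k] := balanced_sum_eq_pred balE nk_gt0 sum_fE_l.
have le_m : (#|W| - #|V|).-1.*2 <= #|A| by rewrite cardV; lia.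
have [S [L [P [e0 [ext cardP]]]]] :=
  extension_exists l a0 f_inj V_gt0 W_connected (leqnn (#|W| - #|V|)) le_m.
exists L; apply/cordial_balancedP; split.
  exact: (fV_extension_balanced f_inj ext cardP fV_k).
exact: (fE_extension_balanced f_inj V_gt0 ext cardP adj_irr adjS_irr f_adj
  cardEV cardEW balE fE_a0 fE_k).
Qed.
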